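(* Let $\mathcal A=(S,R)$ be a finitary argumentation network ($S\neq\varnothing$, $R\subseteq S\times S$, each element has finitely many attackers) and let $\Delta_{\mathcal A}$ be the $\mathbf{CN}$-theory $$\Delta_{\mathcal A}=\{x\mid x\in S \text{ unattacked}\}\cup\{y\leftrightarrow \textstyle\bigwedge_{zRy}Nz\mid y\in S\}\cup\{z\to Ny\mid zRy\}\cup\{(\textstyle\bigwedge_{zRy}\neg z)\wedge(\bigvee_{zRy}\neg Nz)\to \neg y\wedge\neg Ny\mid y\in S\}.$$ Then $\Delta_{\mathcal A}$ is $\mathbf{CN}$-consistent.
   Context: The logic $\mathbf{CN}$: the elements of $S$ are basic atoms; atomic formulas are $q$ and $Nq$ for basic atoms $q$; formulas are built with classical connectives; $\Delta\vdash_{\mathbf{CN}}A$ iff $\Delta\cup\{Nq\to\neg q\mid q\text{ basic atom}\}\vdash A$ in classical propositional logic (treating each $q$ and $Nq$ as distinct classical atoms). Consistency means $\Delta_{\mathcal A}\nvdash_{\mathbf{CN}}\bot$. Empty conjunctions are $\top$, empty disjunctions are $\bot$. *)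

From Stdlib Require Import List.
Import ListNotations.
Set Implicit Arguments.

Inductive atom (S : Type) : Type :=
| Basic : S -> atom S
| NAtom : S -> atom S.

Inductive form (S : Type) : Type :=
| FVar : atom S -> form S
| FBot : form S
| FTop : form S
| FNeg : form S -> form S
| FAnd : form S -> form S -> form S
| FOr  : form S -> form S -> form S
| FImp : form S -> form S -> form S
| FIff : form S -> form S -> form S.

Arguments FBot {S}.
Arguments FTop {S}.

Definition BigAnd (S : Type) (l : list (form S)) : form S := fold_right (@FAnd S) FTop l.
Definition BigOr  (S : Type) (l : list (form S)) : form S := fold_right (@FOr S) FBot l.

(* Classical semantics: q and Nq are independent classical atoms. *)
Fixpoint eval (S : Type) (v : atom S -> Prop) (A : form S) : Prop :=
  match A with
  | FVar a => v a
  | FBot => False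
  | FTop => True
  | FNeg B => ~ eval v B
  | FAnd B C => eval v B /\ eval v C
  | FOr B C => eval v B \/ eval v C
  | FImp B C => eval v B -> eval v C
  | FIff B C => (eval v B <-> eval v C)
  end.

Definition CN_axiom (S : Type) (A : form S) : Prop :=
  exists q : S, A = FImp (FVar (NAtom q)) (FNeg (FVar (Basic q))).

(* Classical derivability from a (possibly infinite) set of premises:
   A follows from finitely many premises (by completeness of classical
   propositional logic for finite premise sets, this is Hilbert-style
   derivability). *)
Definition classical_derives (S : Type) (Gam : form S -> Prop) (A : form S) : Prop :=
  exists G : list (form S),
    (forall B, In B G -> Gam B) /\
    (forall v : atom S -> Prop, (forall B, In B G -> eval v B) -> eval v A).

Definition CN_derives (S : Type) (Delta : form S -> Prop) (A : form S) : Prop :=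
  classical_derives (fun B => Delta B \/ CN_axiom B) A.

Definition CN_consistent (S : Type) (Delta : form S -> Prop) : Prop :=
  ~ CN_derives Delta FBot.

Definition lists_attackers (S : Type) (R : S -> S -> Prop) (y : S) (l : list S) : Prop :=
  forall z, R z y <-> In z l.

Definition finitary (S : Type) (R : S -> S -> Prop) : Prop :=
  forall y, exists l : list S, lists_attackers R y l.

Definition unattacked (S : Type) (R : S -> S -> Prop) (x : S) : Prop :=
  forall z, ~ R z x.

(* The theory Delta_A.  Big conjunctions/disjunctions over attackers are
   formed from any list enumerating the attackers (all such choices are
   included; they are classically equivalent). *)
Definition Delta_A (S : Type) (R : S -> S -> Prop) (A : form S) : Prop :=
  (exists x, unattacked R x /\ A = FVar (Basic x))
  \/ (exists y l, lists_attackers R y l /\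
        A = FIff (FVar (Basic y)) (BigAnd (map (fun z => FVar (NAtom z)) l)))
  \/ (exists z y, R z y /\ A = FImp (FVar (Basic z)) (FVar (NAtom y)))
  \/ (exists y l, lists_attackers R y l /\
        A = FImp (FAnd (BigAnd (map (fun z => FNeg (FVar (Basic z))) l))
                       (BigOr (map (fun z => FNeg (FVar (NAtom z))) l)))
                 (FAnd (FNeg (FVar (Basic y))) (FNeg (FVar (NAtom y))))).

(* Take the grounded extension G of the network, i.e. the least fixed point of
   Dung's characteristic function.  Interpret q as "q is in G" and Nq as "q is
   attacked by G".  Since G is conflict-free and exactly the set of arguments
   defended by G, this valuation satisfies every formula of Delta_A and every
   CN axiom Nq -> ~q, so no contradiction is derivable. *)

From Stdlib Require Import List.

Lemma eval_BigAnd_map (S T : Type) (v : atom S -> Prop) (f : T -> form S) (l : list T) :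
  eval v (BigAnd (map f l)) <-> forall z, In z l -> eval v (f z).
Proof.
  induction l as [|a l IH]; simpl.
  - tauto.
  - rewrite IH. split.
    + intros [Ha Hl] z [<-|Hz]; auto.
    + auto.
Qed.

Lemma eval_BigOr_map (S T : Type) (v : atom S -> Prop) (f : T -> form S) (l : list T) :
  eval v (BigOr (map f l)) <-> exists z, In z l /\ eval v (f z).
Proof.
  induction l as [|a l IH]; simpl.
  - split; [tauto | intros [z [[] _]]].
  - rewrite IH. split.
    + intros [Ha|[z [Hz Hf]]]; eauto.
    + intros [z [[<-|Hz] Hf]]; eauto.
Qed.

Lemma CN_consistent_of_model {S : Type} {Delta : form S -> Prop} (v : atom S -> Prop) :
  (forall A, Delta A -> eval v A) -> (forall A, CN_axiom A -> eval v A) ->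
  CN_consistent Delta.
Proof.
  intros HDelta HCN [G [HG Hbot]].
  apply (Hbot v). intros B HB. destruct (HG B HB); auto.
Qed.

Section Grounded.
Context {S : Type} (R : S -> S -> Prop).

Definition defended (X : S -> Prop) (y : S) : Prop :=
  forall z, R z y -> exists w, R w z /\ X w.

Definition grounded (y : S) : Prop :=
  forall X : S -> Prop, (forall a, defended X a -> X a) -> X y.

Lemma defended_mono (X Y : S -> Prop) :
  (forall a, X a -> Y a) -> forall a, defended X a -> defended Y a.
Proof. intros HXY a Ha z Rz. destruct (Ha z Rz) as [w [Rwz Xw]]. eauto. Qed.

Lemma grounded_of_defended a : defended grounded a -> grounded a.
Proof.
  intros Ha X HX. apply HX. revert a Ha. apply defended_mono.
  intros b Gb. exact (Gb X HX).
Qed.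

Lemma defended_of_grounded {a} : grounded a -> defended grounded a.
Proof.
  intros Ga. apply Ga. intros b. apply defended_mono, grounded_of_defended.
Qed.

Lemma grounded_ind (P : S -> Prop) :
  (forall a, defended (fun b => grounded b /\ P b) a -> P a) ->
  forall a, grounded a -> P a.
Proof.
  intros HP a Ga.
  enough (H : grounded a /\ P a) by apply H.
  apply Ga. intros b Hb. split.
  - apply grounded_of_defended. revert b Hb. apply defended_mono. tauto.
  - exact (HP b Hb).
Qed.

(* Both directions are needed in the invariant: an attack from [a] on [b] is
   refuted by a defender of [b], one from [b] on [a] by a defender of [a]. *)
Lemma grounded_conflict_free {a b} : grounded a -> grounded b -> ~ R a b /\ ~ R b a.
Proof.
  intros Ga Gb. revert b Gb a Ga.
  apply (grounded_ind (fun b => forall a, grounded a -> ~ R a b /\ ~ R b a)).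
  intros b Hb a Ga. split.
  - intros Rab. destruct (Hb a Rab) as [w [Rwa [_ Hw]]].
    exact (proj2 (Hw a Ga) Rwa).
  - intros Rba. destruct (defended_of_grounded Ga b Rba) as [u [Rub Gu]].
    destruct (Hb u Rub) as [w [Rwu [_ Hw]]].
    exact (proj2 (Hw u Gu) Rwu).
Qed.

Definition grounded_val (x : atom S) : Prop :=
  match x with
  | Basic y => grounded y
  | NAtom y => exists z, R z y /\ grounded z
  end.

Lemma grounded_val_CN_axiom A : CN_axiom A -> eval grounded_val A.
Proof.
  intros [q ->] [z [Rzq Gz]] Gq. exact (proj1 (grounded_conflict_free Gz Gq) Rzq).
Qed.

Lemma grounded_val_Delta_A A : Delta_A R A -> eval grounded_val A.
Proof.
  intros [[x [Hx ->]] | [[y [l [Hl ->]]] | [[z [y [Rzy ->]]] | [y [l [Hl ->]]]]]];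
    simpl; rewrite ?eval_BigAnd_map, ?eval_BigOr_map; simpl.
  - apply grounded_of_defended. intros z Rz. destruct (Hx z Rz).
  - split.
    + intros Gy z Hz. apply (defended_of_grounded Gy), Hl, Hz.
    + intros H. apply grounded_of_defended. intros z Rz. apply H, Hl, Rz.
  - eauto.
  - intros [Hout [z [Hz Hundef]]]. split.
    + intros Gy. apply Hundef, (defended_of_grounded Gy), Hl, Hz.
    + intros [u [Ruy Gu]]. exact (Hout u (proj1 (Hl u) Ruy) Gu).
Qed.

End Grounded.

Theorem corollary6 (S : Type) (s0 : S) (R : S -> S -> Prop)
  (Hfin : finitary R) : CN_consistent (Delta_A R).
Proof.
  apply (CN_consistent_of_model (grounded_val R)).
  - apply grounded_val_Delta_A.
  - apply grounded_val_CN_axiom.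
Qed.
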